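(* Let $\mathbf P=(P,\leq,{}',0,1)$ be a finite pseudo-orthomodular poset, and put $M(x,y)=L(U(x,y'),y)$ and $R(x,y)=L(U(L(x,y),x'))$. Then the Dedekind-MacNeille completion $\mathrm{DM}(\mathbf P)$ is a complete orthomodular lattice. Moreover, $\mathrm{DM}(\mathbf P)$ is a left residuated lattice with respect to the operations $x\odot y=(x\vee y')\wedge y$ and $x\to y=(x\wedge y)\vee x'$ obtained from $M$ and $R$ by the DM-transformation.
   Context: For $M\subseteq P$, $U(M)$, $L(M)$ are the sets of upper and lower bounds; $U(a,b)=U(\{a,b\})$, $L(a,b)=L(\{a,b\})$. A poset with complementation is a bounded poset with antitone involution $'$ ($x\le y\Rightarrow y'\le x'$, $x''=x$) with $L(x,x')=\{0\}$, $U(x,x')=\{1\}$; it is pseudo-orthomodular if $L(U(L(x,y),y'),y)=L(x,y)$ for all $x,y$. The Dedekind-MacNeille completion $\mathrm{DM}(\mathbf P)$ is the complete lattice of subsets $B\subseteq P$ with $L(U(B))=B$ under inclusion, $P$ embedded via $x\mapsto L(\{x\})$, with antitone involution $X'=L(\{u'\mid u\in X\})$. The DM-transformation replaces $U(x,y)$ or $LU(x,y)$ by $x\vee y$ and $L(x,y)$ by $x\wedge y$. A lattice with complementation is orthomodular if $x\vee y=((x\vee y)\wedge y')\vee y$. A lattice with top $1$ is left residuated with respect to binary operations $\odot,\to$ if $x\odot 1=x=1\odot x$ and $x\odot y\le z\iff x\le y\to z$ for all $x,y,z$. *)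

From mathcomp Require Import all_boot.
Set Implicit Arguments. Unset Strict Implicit. Unset Printing Implicit Defensive.

Section DM.
Variables (T : finType) (le : rel T).

Definition ub (M : {set T}) : {set T} := [set u | [forall a in M, le a u]].
Definition lb (M : {set T}) : {set T} := [set l | [forall a in M, le l a]].

Definition is_partial_order : Prop :=
  [/\ forall x, le x x,
      forall x y, le x y -> le y x -> x = y &
      forall x y z, le x y -> le y z -> le x z].

Definition poset_with_complementation (c : T -> T) (z o : T) : Prop :=
  [/\ is_partial_order,
      forall x, le z x /\ le x o,
      forall x y, le x y -> le (c y) (c x),
      forall x, c (c x) = x &
      forall x, lb [set x; c x] = [set z] /\ ub [set x; c x] = [set o]].

Definition pseudo_orthomodular (c : T -> T) : Prop :=
  forall x y, lb (ub (lb [set x; y] :|: [set c y]) :|: [set y]) = lb [set x; y].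

(* Dedekind-MacNeille completion: the sets B with L(U(B)) = B, ordered by inclusion *)
Definition is_DM (B : {set T}) : Prop := lb (ub B) = B.

Definition DM_meet (X Y : {set T}) : {set T} := X :&: Y.
Definition DM_join (X Y : {set T}) : {set T} := lb (ub (X :|: Y)).
Definition DM_compl (c : T -> T) (X : {set T}) : {set T} := lb (c @: X).
Definition DM_top : {set T} := [set: T].
Definition DM_bot : {set T} := lb (ub set0).

Definition DM_odot (c : T -> T) (X Y : {set T}) : {set T} :=
  DM_meet (DM_join X (DM_compl c Y)) Y.
Definition DM_impl (c : T -> T) (X Y : {set T}) : {set T} :=
  DM_join (DM_meet X Y) (DM_compl c X).

Definition DM_is_lub (S : {set {set T}}) (J : {set T}) : Prop :=
  is_DM J /\ (forall X, X \in S -> X \subset J) /\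
  (forall Y, is_DM Y -> (forall X, X \in S -> X \subset Y) -> J \subset Y).
Definition DM_is_glb (S : {set {set T}}) (m : {set T}) : Prop :=
  is_DM m /\ (forall X, X \in S -> m \subset X) /\
  (forall Y, is_DM Y -> (forall X, X \in S -> Y \subset X) -> Y \subset m).

End DM.

From mathcomp Require Import all_boot.
Set Implicit Arguments. Unset Strict Implicit. Unset Printing Implicit Defensive.

(* Say that the orthomodular law holds at Y if W = Y v (W /\ Y') whenever
   Y <= W.  Pseudo-orthomodularity says (V v L(y')) /\ L(y) = V for
   V = L(x,y); as every DM-closed V <= L(y) is an intersection of such sets,
   this is the dual law at L(y), and complementation turns it into the law at
   every principal ideal L(p).  If the law holds at D and p <= D', it holds at
   D v L(p): decompose W first along D and then W /\ D' along L(p).  Starting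
   from the bottom, a DM-closed Y is reached in finitely many such steps,
   because as long as D < Y the law at D forces Y /\ D' to contain a nonzero
   point p.  Residuation is then the usual orthomodular computation
   (x v y') /\ y <= z <-> x <= (y /\ z) v y'. *)

Section DedekindMacNeille.
Variables (T : finType) (le : rel T).
Local Notation L := (lb le).
Local Notation U := (ub le).
Local Notation DM := (is_DM le).
Local Notation join := (DM_join le).
Local Notation bot := (DM_bot le).

Lemma lbP (M : {set T}) x : reflect (forall a, a \in M -> le x a) (x \in L M).
Proof. by rewrite inE; apply: (iffP forall_inP). Qed.

Lemma ubP (M : {set T}) x : reflect (forall a, a \in M -> le a x) (x \in U M).
Proof. by rewrite inE; apply: (iffP forall_inP). Qed.

Lemma mem_lb1 p y : (y \in L [set p]) = le y p.
Proof. by apply/lbP/idP => [/(_ p (set11 p)) | yp a /set1P ->]. Qed.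

Lemma lb_anti (A B : {set T}) : A \subset B -> L B \subset L A.
Proof. by move=> /subsetP AB; apply/subsetP=> x /lbP xB; apply/lbP=> a /AB /xB. Qed.

Lemma ub_anti (A B : {set T}) : A \subset B -> U B \subset U A.
Proof. by move=> /subsetP AB; apply/subsetP=> x /ubP xB; apply/ubP=> a /AB /xB. Qed.

Lemma sub_lbub (A : {set T}) : A \subset L (U A).
Proof. by apply/subsetP=> x xA; apply/lbP=> u /ubP; apply. Qed.

Lemma sub_ublb (A : {set T}) : A \subset U (L A).
Proof. by apply/subsetP=> x xA; apply/ubP=> u /lbP; apply. Qed.

Lemma ublbub (A : {set T}) : U (L (U A)) = U A.
Proof. by apply/eqP; rewrite eqEsubset ub_anti ?sub_lbub ?sub_ublb. Qed.

Lemma DM_lb (A : {set T}) : DM (L A).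
Proof. by apply/eqP; rewrite eqEsubset lb_anti ?sub_ublb ?sub_lbub. Qed.

Lemma is_DM_join (A B : {set T}) : DM (join A B).
Proof. exact: DM_lb. Qed.

Lemma lbU (A B : {set T}) : L (A :|: B) = L A :&: L B.
Proof.
apply/setP=> x; apply/lbP/setIP => [xAB | [/lbP xA /lbP xB] a /setUP[/xA | /xB] //].
by split; apply/lbP=> a aAB; apply: xAB; rewrite inE aAB ?orbT.
Qed.

Lemma ubU (A B : {set T}) : U (A :|: B) = U A :&: U B.
Proof.
apply/setP=> x; apply/ubP/setIP => [xAB | [/ubP xA /ubP xB] a /setUP[/xA | /xB] //].
by split; apply/ubP=> a aAB; apply: xAB; rewrite inE aAB ?orbT.
Qed.

Lemma lbub_min (A X : {set T}) : DM X -> A \subset X -> L (U A) \subset X.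
Proof. by move=> DX AX; rewrite -DX; apply/lb_anti/ub_anti. Qed.

Lemma DM_setI (X Y : {set T}) : DM X -> DM Y -> DM (X :&: Y).
Proof.
move=> DX DY; apply/eqP; rewrite eqEsubset sub_lbub andbT subsetI.
by rewrite !lbub_min ?subsetIl ?subsetIr.
Qed.

Lemma DM_setT : DM [set: T].
Proof. by apply/eqP; rewrite eqEsubset subsetT sub_lbub. Qed.

Lemma DM_bot_sub (X : {set T}) : DM X -> bot \subset X.
Proof. by move=> DX; apply: lbub_min; rewrite ?sub0set. Qed.

Lemma join_ubl (A B : {set T}) : A \subset join A B.
Proof. exact: subset_trans (subsetUl A B) (sub_lbub _). Qed.

Lemma join_ubr (A B : {set T}) : B \subset join A B.
Proof. exact: subset_trans (subsetUr A B) (sub_lbub _). Qed.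

Lemma join_least (A B W : {set T}) :
  DM W -> A \subset W -> B \subset W -> join A B \subset W.
Proof. by move=> DW AW BW; apply: lbub_min; rewrite // subUset AW. Qed.

Lemma joinS (A B A' B' : {set T}) :
  A \subset A' -> B \subset B' -> join A B \subset join A' B'.
Proof. by move=> AA' BB'; apply/lb_anti/ub_anti/setUSS. Qed.

Lemma joinC (A B : {set T}) : join A B = join B A.
Proof. by rewrite /DM_join setUC. Qed.

Lemma joinA (A B C : {set T}) : join A (join B C) = join (join A B) C.
Proof. by rewrite /DM_join ubU ublbub [in RHS]ubU ublbub !ubU setIA. Qed.

Lemma join_setT (A : {set T}) : join [set: T] A = [set: T].
Proof. by apply/eqP; rewrite eqEsubset subsetT join_ubl. Qed.

Lemma join_bot (X : {set T}) : DM X -> join X bot = X.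
Proof.
by move=> DX; apply/eqP; rewrite eqEsubset join_ubl join_least ?DM_bot_sub.
Qed.

Lemma DM_lub_bigcup (S : {set {set T}}) :
  DM_is_lub le S (L (U (\bigcup_(X in S) X))).
Proof.
split; [exact: DM_lb | split=> [X XS | Y DY SY]].
  exact: subset_trans (bigcup_sup X XS) (sub_lbub _).
by apply: lbub_min => //; apply/bigcupsP.
Qed.

Lemma DM_glb_bigcap (S : {set {set T}}) :
  (forall X, X \in S -> DM X) -> DM_is_glb le S (\bigcap_(X in S) X).
Proof.
move=> DS; split; [|split=> [X XS | Y _ SY]; last exact/bigcapsP].
  apply/eqP; rewrite eqEsubset sub_lbub andbT; apply/bigcapsP=> X XS.
  exact: lbub_min (DS X XS) (bigcap_inf X XS).
exact: bigcap_inf.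
Qed.

Lemma DM_lub_join (X Y : {set T}) : DM_is_lub le [set X; Y] (join X Y).
Proof.
split; [exact: DM_lb | split=> [A /set2P[]-> | W DW XYW]].
- exact: join_ubl.
- exact: join_ubr.
- by apply: join_least; rewrite // XYW // !inE eqxx ?orbT.
Qed.

Lemma DM_glb_meet (X Y : {set T}) :
  DM X -> DM Y -> DM_is_glb le [set X; Y] (DM_meet X Y).
Proof.
move=> DX DY; split; [exact: DM_setI | split=> [A /set2P[]-> | W _ WXY]].
- exact: subsetIl.
- exact: subsetIr.
- by rewrite subsetI !WXY // !inE eqxx ?orbT.
Qed.

Section Preorder.
Hypothesis le_refl : forall x, le x x.
Hypothesis le_trans : forall x y w, le x y -> le y w -> le x w.

Lemma mem_lb1_refl p : p \in L [set p].
Proof. by rewrite mem_lb1. Qed.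

Lemma lbub1 p : L (U [set p]) = L [set p].
Proof.
apply/eqP; rewrite eqEsubset lb_anti ?sub1set; last by apply/ubP=> a /set1P ->.
apply/subsetP=> y; rewrite mem_lb1 => yp; apply/lbP=> u /ubP pu.
exact: le_trans yp (pu p (set11 p)).
Qed.

Lemma ub_lb1 p : U (L [set p]) = U [set p].
Proof. by rewrite -lbub1 ublbub. Qed.

Lemma lb1_sub_DM (X : {set T}) p : DM X -> p \in X -> L [set p] \subset X.
Proof. by move=> DX pX; rewrite -lbub1 lbub_min ?sub1set. Qed.

Section Complement.
Variable c : T -> T.
Hypothesis c_anti : forall x y, le x y -> le (c y) (c x).
Hypothesis cK : involutive c.
Local Notation compl := (DM_compl le c).

Lemma is_DM_compl (A : {set T}) : DM (compl A).
Proof. exact: DM_lb. Qed.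

Lemma memc (A : {set T}) y : (y \in c @: A) = (c y \in A).
Proof. by rewrite -{1}(cK y) mem_imset //; apply: can_inj cK. Qed.

Lemma imcK (A : {set T}) : c @: (c @: A) = A.
Proof. by apply/setP=> y; rewrite !memc cK. Qed.

Lemma imc_lb (A : {set T}) : c @: L A = U (c @: A).
Proof.
apply/setP=> y; rewrite memc; apply/lbP/ubP => [cyA a | Ay a aA].
  by rewrite memc => /cyA /c_anti; rewrite !cK.
by move: (Ay (c a)); rewrite memc cK => /(_ aA) /c_anti; rewrite cK.
Qed.

Lemma imc_ub (A : {set T}) : c @: U A = L (c @: A).
Proof. by rewrite -[A in LHS]imcK -imc_lb imcK. Qed.

Lemma compl2 (A : {set T}) : compl (compl A) = L (U A).
Proof. by rewrite /DM_compl imc_lb imcK. Qed.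

Lemma complK (X : {set T}) : DM X -> compl (compl X) = X.
Proof. by rewrite compl2. Qed.

Lemma compl_anti (A B : {set T}) : A \subset B -> compl B \subset compl A.
Proof. by move=> AB; apply/lb_anti/imsetS. Qed.

Lemma compl_join (A B : {set T}) : compl (join A B) = compl A :&: compl B.
Proof. by rewrite /DM_compl /DM_join imc_lb imc_ub DM_lb imsetU lbU. Qed.

Lemma compl_meet (X Y : {set T}) :
  DM X -> DM Y -> compl (X :&: Y) = join (compl X) (compl Y).
Proof.
move=> DX DY; rewrite -{1}(complK DX) -{1}(complK DY) -compl_join.
by rewrite complK //; apply: is_DM_join.
Qed.

Lemma compl_setT : compl [set: T] = bot.
Proof.
by congr (L _); apply/setP=> y; rewrite memc inE; apply/esym/ubP=> a; rewrite inE.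
Qed.

Lemma compl_bot : compl bot = [set: T].
Proof. by rewrite -compl_setT complK //; apply: DM_setT. Qed.

Lemma compl_lb1 p : compl (L [set p]) = L [set c p].
Proof. by rewrite /DM_compl imc_lb imset_set1 lbub1. Qed.

Definition oml_at (Y : {set T}) : Prop :=
  forall W, DM W -> Y \subset W -> W \subset join Y (W :&: compl Y).

Definition dual_oml_at (Y : {set T}) : Prop :=
  forall V, DM V -> V \subset Y -> join V (compl Y) :&: Y \subset V.

Lemma oml_at_compl (Y : {set T}) : DM Y -> dual_oml_at Y -> oml_at (compl Y).
Proof.
move=> DY dY W DW YW; have WY : compl W \subset Y by rewrite -(complK DY) compl_anti.
have := compl_anti (dY _ (DM_lb _) WY).
by rewrite (compl_meet (is_DM_join _ _) DY) compl_join !complK // joinC.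
Qed.

Lemma dual_oml_at_compl (Y : {set T}) : oml_at Y -> dual_oml_at (compl Y).
Proof.
move=> oY V DV VY; have YV : Y \subset compl V.
  by apply: subset_trans (sub_lbub Y) _; rewrite -compl2 compl_anti.
have := compl_anti (oY _ (DM_lb _) YV).
by rewrite compl_join (compl_meet (DM_lb _) (DM_lb _)) (complK DV) setIC.
Qed.

Lemma oml_at_bot : oml_at bot.
Proof. by move=> W DW _; rewrite compl_bot setIT join_ubr. Qed.

Section Orthocomplement.
Variables z o : T.
Hypothesis compl_pairs :
  forall x, L [set x; c x] = [set z] /\ U [set x; c x] = [set o].

Lemma le_z x : le z x.
Proof. by have := set11 z; rewrite -(compl_pairs x).1 => /lbP; apply; rewrite set21. Qed.

Lemma le_o x : le x o.
Proof. by have := set11 o; rewrite -(compl_pairs x).2 => /ubP; apply; rewrite set21. Qed.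

Lemma meet_compl (X : {set T}) : DM X -> X :&: compl X = bot.
Proof.
move=> DX; apply/eqP; rewrite eqEsubset subsetI (DM_bot_sub DX).
rewrite (DM_bot_sub (is_DM_compl X)) !andbT.
apply/subsetP=> t /setIP[tX /lbP tX']; have : t \in L [set t; c t].
  by apply/lbP=> a /set2P[]->; [apply: le_refl | apply/tX'/imset_f].
by rewrite (compl_pairs t).1 => /set1P ->; apply/lbP=> x _; apply: le_z.
Qed.

Lemma join_compl (X : {set T}) : join X (compl X) = [set: T].
Proof.
apply/eqP; rewrite eqEsubset subsetT; apply/subsetP=> t _; apply/lbP=> u /ubP Xu.
have cuX : c u \in compl X.
  apply/lbP=> a; rewrite memc => caX.
  by have := Xu (c a); rewrite inE caX => /(_ isT) /c_anti; rewrite cK.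
have : u \in U [set u; c u].
  by apply/ubP=> a /set2P[]->; [apply: le_refl | apply/Xu; rewrite inE cuX orbT].
by rewrite (compl_pairs u).2 => /set1P ->; apply: le_o.
Qed.

Section PseudoOrthomodular.
Hypothesis pom : pseudo_orthomodular le c.

Lemma pseudo_orthomodular_DM x y :
  join (L [set x; y]) (L [set c y]) :&: L [set y] = L [set x; y].
Proof. by rewrite /DM_join ubU ub_lb1 -ubU -lbU; apply: pom. Qed.

Lemma dual_oml_at_lb1 y : dual_oml_at (L [set y]).
Proof.
move=> V DV Vy; rewrite compl_lb1; apply/subsetP=> t tJ; rewrite -DV.
apply/lbP=> u /ubP Vu; have VL : V \subset L [set u; y].
  apply/subsetP=> b bV; apply/lbP=> a /set2P[]->; first exact: Vu.
  by rewrite -mem_lb1; apply: (subsetP Vy).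
have := setSI (L [set y]) (joinS VL (subxx (L [set c y]))).
by rewrite pseudo_orthomodular_DM => /subsetP /(_ t tJ) /lbP; apply; rewrite set21.
Qed.

Lemma oml_at_lb1 p : oml_at (L [set p]).
Proof.
have := oml_at_compl (DM_lb _) (dual_oml_at_lb1 (y := c p)).
by rewrite compl_lb1 cK.
Qed.

Lemma oml_at_join_lb1 (D : {set T}) p :
  DM D -> oml_at D -> p \in compl D -> oml_at (join D (L [set p])).
Proof.
move=> DD oD pD' W DW DpW.
have DW' : D \subset W := subset_trans (join_ubl _ _) DpW.
have pW : p \in W := subsetP DpW p (subsetP (join_ubr _ _) p (mem_lb1_refl p)).
have DWD' : DM (W :&: compl D) := DM_setI DW (is_DM_compl D).
have pWD' : L [set p] \subset W :&: compl D by apply: lb1_sub_DM; rewrite // inE pW.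
rewrite compl_join setIA -joinA.
exact: subset_trans (oD W DW DW') (joinS (subxx D) (oml_at_lb1 DWD' pWD')).
Qed.

Lemma oml_at_eq (Y D : {set T}) :
  DM Y -> DM D -> oml_at D -> D \subset Y -> Y :&: compl D \subset bot -> Y = D.
Proof.
move=> DY DD oD sDY YD'; apply/eqP; rewrite eqEsubset sDY andbT.
apply: subset_trans (oD Y DY sDY) _; apply: join_least => //.
exact: subset_trans YD' (DM_bot_sub DD).
Qed.

Lemma oml_at_DM (Y : {set T}) : DM Y -> oml_at Y.
Proof.
move=> DY; suff grow D : DM D -> oml_at D -> D \subset Y -> oml_at Y.
  exact: grow (DM_lb _) oml_at_bot (DM_bot_sub DY).
have [n] := ubnP #|Y :\: D|; elim: n D => // n IH D ltYDn DD oD sDY.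
have [YD'|/subsetPn[p /setIP[pY pD'] pbot]] := boolP (Y :&: compl D \subset bot).
  by rewrite (oml_at_eq DY DD oD sDY YD').
have pD : p \notin D.
  by apply: contra pbot => pinD; rewrite -(meet_compl DD) inE pinD.
set Dp := join D (L [set p]).
have ltYDp : #|Y :\: Dp| < #|Y :\: D|.
  apply/proper_card/properP; split; first exact/setDS/join_ubl.
  exists p; first by rewrite in_setD pY pD.
  by rewrite in_setD (subsetP (join_ubr _ _) p (mem_lb1_refl p)).
apply: (IH Dp); first exact: leq_trans ltYDp (ltnSE ltYDn).
- exact: is_DM_join.
- exact: oml_at_join_lb1.
- exact: join_least DY sDY (lb1_sub_DM DY pY).
Qed.

Lemma dual_oml_at_DM (Y : {set T}) : DM Y -> dual_oml_at Y.
Proof.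
by move=> DY; rewrite -(complK DY); apply/dual_oml_at_compl/oml_at_DM/is_DM_compl.
Qed.

Lemma DM_oml (X Y : {set T}) : DM Y -> join X Y = join (join X Y :&: compl Y) Y.
Proof.
move=> DY; apply/eqP; rewrite eqEsubset; apply/andP; split.
  rewrite [join (_ :&: _) _]joinC.
  by apply: (oml_at_DM DY); [apply: is_DM_join | apply: join_ubr].
by apply: join_least; [apply: is_DM_join | apply: subsetIl | apply: join_ubr].
Qed.

Lemma DM_residuation (X Y Z : {set T}) : DM Y -> DM Z ->
  (DM_odot le c X Y \subset Z <-> X \subset DM_impl le c Y Z).
Proof.
move=> DY DZ; rewrite /DM_odot /DM_impl /DM_meet; split=> [odotZ | Ximpl].
  apply: subset_trans (join_ubl X (compl Y)) _.
  apply: subset_trans (oml_at_DM (is_DM_compl Y) (is_DM_join _ _) (join_ubr X _)) _.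
  by rewrite complK // joinC; apply: joinS; rewrite // subsetI subsetIr odotZ.
apply: subset_trans (setSI Y (join_least (is_DM_join _ _) Ximpl (join_ubr _ _))) _.
apply: subset_trans (dual_oml_at_DM DY (DM_setI DY DZ) (subsetIl Y Z)) _.
exact: subsetIr.
Qed.

End PseudoOrthomodular.
End Orthocomplement.

Lemma DM_odotx1 (X : {set T}) : DM X -> DM_odot le c X [set: T] = X.
Proof. by move=> DX; rewrite /DM_odot /DM_meet compl_setT setIT join_bot. Qed.

Lemma DM_odot1x (X : {set T}) : DM_odot le c [set: T] X = X.
Proof. by rewrite /DM_odot /DM_meet join_setT setTI. Qed.

End Complement.
End Preorder.
End DedekindMacNeille.

Theorem corollary4 (T : finType) (le : rel T) (c : T -> T) (z o : T) :
  poset_with_complementation le c z o ->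
  pseudo_orthomodular le c ->
  (* DM(P) is a complete lattice, binary meet/join being DM_meet / DM_join *)
  (forall S : {set {set T}}, (forall X, X \in S -> is_DM le X) ->
     (exists J, DM_is_lub le S J) /\ (exists m, DM_is_glb le S m)) /\
  (forall X Y, is_DM le X -> is_DM le Y ->
     DM_is_lub le [set X; Y] (DM_join le X Y) /\
     DM_is_glb le [set X; Y] (DM_meet X Y)) /\
  (* bounds *)
  is_DM le (DM_top T) /\ is_DM le (DM_bot le) /\
  (forall X, is_DM le X -> DM_bot le \subset X /\ X \subset DM_top T) /\
  (* ' is a complementation on DM(P) *)
  (forall X, is_DM le X -> is_DM le (DM_compl le c X)) /\
  (forall X Y, is_DM le X -> is_DM le Y -> X \subset Y ->
     DM_compl le c Y \subset DM_compl le c X) /\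
  (forall X, is_DM le X -> DM_compl le c (DM_compl le c X) = X) /\
  (forall X, is_DM le X ->
     DM_meet X (DM_compl le c X) = DM_bot le /\
     DM_join le X (DM_compl le c X) = DM_top T) /\
  (* orthomodular law *)
  (forall X Y, is_DM le X -> is_DM le Y ->
     DM_join le X Y =
     DM_join le (DM_meet (DM_join le X Y) (DM_compl le c Y)) Y) /\
  (* left residuated lattice w.r.t. odot and impl *)
  (forall X, is_DM le X ->
     DM_odot le c X (DM_top T) = X /\ DM_odot le c (DM_top T) X = X) /\
  (forall X Y Z, is_DM le X -> is_DM le Y -> is_DM le Z ->
     (DM_odot le c X Y \subset Z <-> X \subset DM_impl le c Y Z)).
Proof.
move=> [[le_refl _ le_trans] _ c_anti cK compl_pairs] pom.
split=> [S DS|]; first by split; eexists; [apply: DM_lub_bigcup | apply: DM_glb_bigcap].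
split=> [X Y DX DY|]; first by split; [apply: DM_lub_join | apply: DM_glb_meet].
split; first exact: DM_setT.
split; first exact: DM_lb.
split=> [X DX|]; first by rewrite subsetT DM_bot_sub.
split=> [X _|]; first exact: DM_lb.
split=> [X Y _ _|]; first exact: compl_anti.
split=> [X DX|]; first exact: complK.
split=> [X DX|]; first by split; [apply: meet_compl | apply: join_compl].
split=> [X Y _ DY|]; first exact: DM_oml.
split=> [X DX|]; first by split; [apply: DM_odotx1 | apply: DM_odot1x].
by move=> X Y Z _ DY DZ; apply: DM_residuation.
Qed.
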